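(* Let $\lambda>0$, let $d\ge1$ be an integer, and let $(X_t)_{t\ge1}$ be any sequence of vectors in $\mathbb R^p$ with $\|X_t\|_2\le1$. For $t\ge0$ let $V_t=\sum_{s=1}^tX_sX_s^\top+\lambda\mathrm{Id}$ (so $V_0=\lambda\mathrm{Id}$). Then for all $T\ge d+1$, $$\sum_{t=d+1}^T\min\big(1,\|X_t\|_{V_{t-d}^{-1}}^2\big)\le2dp\log\Big(1+\frac{T}{\lambda dp}\Big).$$
   Context: $\|u\|_A=\sqrt{u^\top Au}$ for a positive definite matrix $A$. *)

From mathcomp Require Import all_boot all_order all_algebra.
From mathcomp Require Import all_classical all_reals all_analysis.
Set Implicit Arguments. Unset Strict Implicit. Unset Printing Implicit Defensive.
Import Order.TTheory GRing.Theory Num.Theory.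
Local Open Scope ring_scope.

Definition norm2 (R : realType) (p : nat) (x : 'cV[R]_p) : R :=
  Num.sqrt (\sum_(i < p) x i 0 ^+ 2).

Definition mnorm (R : realType) (p : nat) (A : 'M[R]_p) (x : 'cV[R]_p) : R :=
  Num.sqrt ((x^T *m A *m x) 0 0).

Definition Vmat (R : realType) (p : nat) (lambda : R) (X : nat -> 'cV[R]_p)
  (t : nat) : 'M[R]_p :=
  \sum_(1 <= s < t.+1) (X s *m (X s)^T) + lambda%:M.

From mathcomp Require Import all_boot all_order all_algebra.
From mathcomp Require Import all_classical all_reals all_analysis.
From mathcomp Require Import ring lra zify.
Import Order.TTheory GRing.Theory Num.Theory.
Local Open Scope ring_scope.

(* Compare V_(t-d) with the subsampled matrix
   W_t = lambda Id + sum_(s <= t, d | t - s) X_s X_s^T  ([Vskip]).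
   Since W_(t-d) <= V_(t-d) in the Loewner order, the V_(t-d)^-1-norm of X_t is at
   most its W_(t-d)^-1-norm; since W_t = W_(t-d) + X_t X_t^T, the matrix determinant
   lemma gives ln det W_t - ln det W_(t-d) = ln (1 + |X_t|^2_(W_(t-d)^-1)), which is
   at least half of the summand.  These increments telescope along the d residue
   classes modulo d, leaving sum_(i<d) ln det W_(T-i) - d p ln lambda.  Hadamard's
   inequality and ln x <= x - 1 give ln det W <= p (ln m - 1) + tr W / m for every
   m > 0; the d traces add up to at most d p lambda + T, and m = lambda + T / (d p)
   yields the bound. *)

Section Determinants.
Context {R : comUnitRingType}.

Lemma det1Dmx_rank1 {n} (u v : 'cV[R]_n) :
  \det (1%:M + u *m v^T) = 1 + (v^T *m u) 0 0.
Proof.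
pose M := block_mx (1%:M : 'M[R]_n) (- u) v^T (1%:M : 'M[R]_1).
have M_lfact : M = block_mx 1%:M 0 v^T 1%:M *m block_mx 1%:M (- u) 0 (1%:M + v^T *m u).
  by rewrite mulmx_block ?mul1mx ?mul0mx ?mulmx0 ?mulmx1 ?addr0 ?add0r mulmxN addrC addrK.
have M_rfact : M = block_mx (1%:M + u *m v^T) (- u) 0 1%:M *m block_mx 1%:M 0 v^T 1%:M.
  by rewrite mulmx_block ?mul1mx ?mul0mx ?mulmx0 ?mulmx1 ?addr0 ?add0r mulNmx addrK.
have := congr1 determinant M_lfact; rewrite M_rfact !det_mulmx.
rewrite !det_lblock !det_ublock !det1 !mulr1 !mul1r => ->.
by rewrite det_mx11 !mxE eqxx mulr1n.
Qed.

Lemma det_block_schur {m n} (A : 'M[R]_m) (B : 'M[R]_(m, n)) C (D : 'M[R]_n) :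
  D \in unitmx -> \det (block_mx A B C D) = \det (A - B *m invmx D *m C) * \det D.
Proof.
move=> unitD.
have -> : block_mx A B C D =
    block_mx (A - B *m invmx D *m C) (B *m invmx D) 0 1%:M *m block_mx 1%:M 0 C D.
  rewrite mulmx_block ?mul1mx ?mul0mx ?mulmx0 ?mulmx1 ?addr0 ?add0r subrK.
  by rewrite -mulmxA mulVmx // mulmx1.
by rewrite det_mulmx det_ublock det_lblock !det1 mulr1 mul1r.
Qed.

End Determinants.

Section QuadraticForms.
Context {R : realFieldType}.

Lemma cV_dotC {n} (u v : 'cV[R]_n) : (u^T *m v) 0 0 = (v^T *m u) 0 0.
Proof. by rewrite -(trmxK (u^T *m v)) trmx_mul trmxK [LHS]mxE. Qed.

Definition qform {n} (M : 'M[R]_n) (x : 'cV[R]_n) : R := (x^T *m M *m x) 0 0.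
Definition psdmx {n} (M : 'M[R]_n) := forall x, 0 <= qform M x.
Definition posdefmx {n} (M : 'M[R]_n) := forall x, x != 0 -> 0 < qform M x.

Context {n : nat}.
Implicit Types (M A B : 'M[R]_n) (x y : 'cV[R]_n).

Lemma qformD A B x : qform (A + B) x = qform A x + qform B x.
Proof. by rewrite /qform mulmxDr mulmxDl mxE. Qed.

Lemma qform_rank1 x y : qform (x *m x^T) y = (y^T *m x) 0 0 ^+ 2.
Proof. by rewrite /qform !mulmxA -(mulmxA _ x^T) mxE big_ord1 (cV_dotC x y). Qed.

Lemma qform_scalar (a : R) x : qform a%:M x = a * \sum_i x i 0 ^+ 2.
Proof.
rewrite /qform mul_mx_scalar -scalemxAl !mxE; congr (_ * _).
by apply: eq_bigr => i _; rewrite mxE expr2.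
Qed.

Lemma qform_delta M j : qform M (delta_mx j 0) = M j j.
Proof. by rewrite /qform trmx_delta -rowE -colE !mxE. Qed.

Lemma qform_invmx M x : M \in unitmx -> qform (invmx M) x = qform M (invmx M *m x).
Proof.
move=> unitM; have MK : M *m (invmx M *m x) = x by rewrite mulKVmx.
by rewrite /qform -(mulmxA _ M) MK cV_dotC mulmxA.
Qed.

Lemma posdef_psd M : posdefmx M -> psdmx M.
Proof.
move=> pdM x; have [->|/pdM/ltW //] := eqVneq x 0.
by rewrite /qform mulmx0 mxE.
Qed.

Lemma psd_rank1 x : psdmx (x *m x^T).
Proof. by move=> y; rewrite qform_rank1 sqr_ge0. Qed.

Lemma psd_sum I (r : seq I) (P : pred I) (F : I -> 'M[R]_n) :
  (forall i, P i -> psdmx (F i)) -> psdmx (\sum_(i <- r | P i) F i).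
Proof.
move=> psdF x; apply: (big_ind (fun M => 0 <= qform M x)) => //.
- by rewrite /qform mulmx0 mul0mx mxE.
- by move=> A B ? ?; rewrite qformD addr_ge0.
- by move=> i /psdF.
Qed.

Lemma posdefD A B : posdefmx A -> psdmx B -> posdefmx (A + B).
Proof. by move=> pdA psdB x /pdA ?; rewrite qformD ltr_wpDr. Qed.

Lemma posdef_scalar (a : R) : 0 < a -> posdefmx (a%:M : 'M[R]_n).
Proof.
move=> a_gt0 x x_neq0; rewrite qform_scalar pmulr_rgt0 //.
have sqr_x_ge0 i : 0 <= x i 0 ^+ 2 := sqr_ge0 _.
rewrite lt_def sumr_ge0 ?andbT //; apply: contra x_neq0 => /eqP/psumr_eq0P x0.
apply/eqP/matrixP => i j; rewrite ord1 mxE; apply/eqP.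
by rewrite -sqrf_eq0 x0.
Qed.

Lemma posdef_diag_gt0 M j : posdefmx M -> 0 < M j j.
Proof.
move=> pdM; rewrite -qform_delta; apply: pdM; apply/eqP => /matrixP/(_ j 0).
by rewrite !mxE !eqxx => /eqP; rewrite oner_eq0.
Qed.

Lemma sym_sum_rank1 I (r : seq I) (P : pred I) (x : I -> 'cV[R]_n) :
  (\sum_(i <- r | P i) x i *m (x i)^T)^T = \sum_(i <- r | P i) x i *m (x i)^T.
Proof. by rewrite linear_sum; apply: eq_bigr => i _ /=; rewrite trmx_mul trmxK. Qed.

End QuadraticForms.

Section PositiveDefinite.
Context {R : realFieldType}.

Lemma posdef_drsubmx {m n} (M : 'M[R]_(m + n)) : posdefmx M -> posdefmx (drsubmx M).
Proof.
move=> pdM z z_neq0.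
have -> : qform (drsubmx M) z = qform M (col_mx 0 z).
  rewrite /qform -[in RHS]mulmxA -{2}[M]submxK mul_block_col tr_col_mx mul_row_col.
  by rewrite trmx0 !mulmx0 !mul0mx !add0r mulmxA.
by apply: pdM; rewrite col_mx_eq0 negb_and z_neq0 orbT.
Qed.

Lemma hadamard_ineq {n} (M : 'M[R]_n) : M^T = M -> posdefmx M ->
  0 < \det M <= \prod_i M i i.
Proof.
elim: n M => [|n IH] M symM pdM; first by rewrite det_mx00 big_ord0 ltr01 lexx.
pose M' : 'M[R]_(1 + n) := M; have MK := submxK M'.
set a := ulsubmx M' in MK; set b := ursubmx M' in MK.
set c := dlsubmx M' in MK; set D := drsubmx M' in MK.
have [_ c_tr _ symD] : [/\ a^T = a, c^T = b, b^T = c & D^T = D].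
  by apply/eq_block_mx; rewrite -tr_block_mx MK.
have pdD : posdefmx D := posdef_drsubmx M' pdM.
have /andP[detD_gt0 detD_le] := IH D symD pdD.
have unitD : D \in unitmx by rewrite unitmxE unitfE gt_eqF.
set s := (a - b *m invmx D *m c) 0 0.
have detM : \det M = s * \det D.
  by rewrite /s -det_mx11 -(det_block_schur a b c D unitD) MK.
have s_gt0 : 0 < s.
  pose y := col_mx (1%:M : 'M[R]_1) (- (invmx D *m c)).
  have y_neq0 : y != 0 by rewrite col_mx_eq0 negb_and oner_neq0.
  have : 0 < qform M' y := pdM y y_neq0.
  rewrite /qform -MK -mulmxA mul_block_col tr_col_mx mul_row_col.
  rewrite !mulmx1 !mulmxN !mulmxA mulmxV // mul1mx subrr mulmx0 addr0.
  by rewrite tr_scalar_mx mul1mx.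
have s_le : s <= a 0 0.
  have : 0 <= qform (invmx D) c by rewrite qform_invmx //; apply: posdef_psd.
  rewrite /qform c_tr => bDc_ge0; rewrite /s !mxE in bDc_ge0 *.
  by rewrite gerBl.
have a00 : a 0 0 = M ord0 ord0 by rewrite !mxE; apply: (congr2 M'); apply: val_inj.
have Dii i : D i i = M (lift ord0 i) (lift ord0 i).
  by rewrite !mxE; apply: (congr2 M'); apply: val_inj.
rewrite detM mulr_gt0 //= big_ord_recl -a00 (eq_bigr _ (fun i _ => esym (Dii i))).
by rewrite ler_pM // ltW.
Qed.

Lemma posdef_unitmx {n} (M : 'M[R]_n) : M^T = M -> posdefmx M -> M \in unitmx.
Proof.
by move=> symM /(hadamard_ineq M symM) /andP[detM_gt0 _]; rewrite unitmxE unitfE gt_eqF.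
Qed.

Lemma det_addmx_rank1 {n} (B : 'M[R]_n) x : B \in unitmx ->
  \det (B + x *m x^T) = \det B * (1 + qform (invmx B) x).
Proof.
move=> unitB; have -> : B + x *m x^T = B *m (1%:M + (invmx B *m x) *m x^T).
  by rewrite mulmxDr mulmx1 !mulmxA mulmxV // mul1mx.
by rewrite det_mulmx det1Dmx_rank1 /qform mulmxA.
Qed.

Lemma qform_invmxD_le {n} (B C : 'M[R]_n) x : B^T = B -> psdmx B -> psdmx C ->
  B \in unitmx -> B + C \in unitmx -> qform (invmx (B + C)) x <= qform (invmx B) x.
Proof.
move=> symB psdB psdC unitB unitBC.
set z := invmx (B + C) *m x; set w := invmx B *m x.
have BCz : (B + C) *m z = x by rewrite mulKVmx.
have Bw : B *m w = x by rewrite mulKVmx.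
have -> : qform (invmx (B + C)) x = (z^T *m x) 0 0.
  by rewrite qform_invmx // /qform -mulmxA BCz.
have -> : qform (invmx B) x = (w^T *m x) 0 0 by rewrite qform_invmx // /qform -mulmxA Bw.
have zBCz : qform B z + qform C z = (z^T *m x) 0 0 by rewrite -qformD /qform -mulmxA BCz.
have wBw : qform B w = (w^T *m x) 0 0 by rewrite /qform -mulmxA Bw.
have zBw : (z^T *m B *m w) 0 0 = (z^T *m x) 0 0 by rewrite -mulmxA Bw.
have wBz : (w^T *m B *m z) 0 0 = (z^T *m x) 0 0.
  by rewrite -mulmxA cV_dotC trmx_mul symB -mulmxA Bw.
have : 0 <= qform B (z - w) + qform C z by rewrite addr_ge0.
rewrite {1}/qform mulmxBr [(z - w)^T]linearB /= !mulmxBl -!trace_mx11 !raddfB /=.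
rewrite !trace_mx11 zBw wBz.
by move: zBCz wBw; rewrite /qform; lra.
Qed.

Lemma qform_invmx_ge0 {n} (M : 'M[R]_n) x : M^T = M -> posdefmx M ->
  0 <= qform (invmx M) x.
Proof. by move=> symM pdM; rewrite qform_invmx ?posdef_unitmx //; apply: posdef_psd. Qed.

Lemma sym_gram_reg {n} I (r : seq I) (P : pred I) (x : I -> 'cV[R]_n) (a : R) :
  (\sum_(i <- r | P i) x i *m (x i)^T + a%:M)^T =
  \sum_(i <- r | P i) x i *m (x i)^T + a%:M.
Proof. by rewrite linearD /= sym_sum_rank1 tr_scalar_mx. Qed.

Lemma posdef_gram_reg {n} I (r : seq I) (P : pred I) (x : I -> 'cV[R]_n) (a : R) :
  0 < a -> posdefmx (\sum_(i <- r | P i) x i *m (x i)^T + a%:M).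
Proof.
move=> a_gt0; rewrite addrC; apply: posdefD; first exact: posdef_scalar.
by apply: psd_sum => i _; apply: psd_rank1.
Qed.

End PositiveDefinite.

Lemma mxtrace_rank1 {R : ringType} {n} (x : 'cV[R]_n) :
  \tr (x *m x^T) = \sum_i x i 0 ^+ 2.
Proof. by apply: eq_bigr => i _; rewrite mxE big_ord1 mxE expr2. Qed.

Lemma telescope_sumr_lag (V : zmodType) (f : nat -> V) d T : (0 < d)%N ->
  \sum_(1 <= t < T.+1) (f t - f (t - d)%N) = \sum_(i < d) f (T - i)%N - f 0%N *+ d.
Proof.
case: d => [//|d] _; elim: T => [|T IH].
  rewrite big_geq //; under eq_bigr do rewrite sub0n.
  by rewrite sumr_const card_ord subrr.
rewrite big_nat_recr //= IH [\sum_(i < d.+1) f (T.+1 - i)%N]big_ord_recl.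
rewrite big_ord_recr /= subn0 subSS.
under [\sum_(i < d) f (T.+1 - _)%N]eq_bigr do rewrite /bump /= add1n subSS.
by rewrite addrAC addrCA addrK.
Qed.

Section Logarithm.
Context {R : realType}.

Lemma ln_le_subr1 (x : R) : 0 < x -> ln x <= x - 1.
Proof.
by move=> x_gt0; have := @le_ln1Dx R (x - 1); rewrite addrCA subrr addr0; apply; lra.
Qed.

Lemma min1_le_2ln1D (u : R) : 0 <= u -> Num.min 1 u <= 2 * ln (1 + u).
Proof.
(* ln (1 + u) >= u / (1 + u) >= min 1 u / 2 *)
move=> u_ge0; have u1_gt0 : 0 < 1 + u by lra.
have : ln (1 + u)^-1 <= (1 + u)^-1 - 1 by rewrite ln_le_subr1 ?invr_gt0.
rewrite lnV ?posrE // => ln1D_ge.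
have u1V : (1 + u) * (1 + u)^-1 = 1 by rewrite mulfV ?gt_eqF.
have [u_le1|u_gt1] := leP u 1; nra.
Qed.

Lemma ln_prod I (r : seq I) (P : pred I) (F : I -> R) : (forall i, P i -> 0 < F i) ->
  ln (\prod_(i <- r | P i) F i) = \sum_(i <- r | P i) ln (F i).
Proof.
move=> F_gt0; elim: r => [|i r IH]; first by rewrite !big_nil ln1.
rewrite !big_cons; case: ifP => // Pi.
by rewrite lnM ?posrE ?F_gt0 ?prodr_gt0 // IH.
Qed.

Lemma ln_det_le {n} (M : 'M[R]_n) (m : R) : M^T = M -> posdefmx M -> 0 < m ->
  ln (\det M) <= (ln m - 1) *+ n + \tr M / m.
Proof.
move=> symM pdM m_gt0; have /andP[detM_gt0 detM_le] := hadamard_ineq M symM pdM.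
have Mii_gt0 i : 0 < M i i := posdef_diag_gt0 M i pdM.
have ln_Mii_le i : ln (M i i) <= ln m - 1 + M i i / m.
  have := ln_le_subr1 _ (divr_gt0 (Mii_gt0 i) m_gt0).
  by rewrite ln_div ?posrE //; lra.
apply: (@le_trans _ _ (\sum_i ln (M i i))).
  by rewrite -ln_prod // ler_ln ?posrE ?prodr_gt0.
apply: le_trans (ler_sum _ (fun i _ => ln_Mii_le i)) _.
by rewrite big_split /= sumr_const card_ord -mulr_suml.
Qed.

End Logarithm.

Lemma sqr_norm2 {R : realType} {n} (x : 'cV[R]_n) : norm2 x ^+ 2 = \sum_i x i 0 ^+ 2.
Proof. by rewrite /norm2 sqr_sqrtr // sumr_ge0 // => i _; apply: sqr_ge0. Qed.

Section SkipDesignMatrix.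
Context {R : realType} {p : nat} (lambda : R) (X : nat -> 'cV[R]_p) (d : nat).
Hypotheses (lambda_gt0 : 0 < lambda) (d_gt0 : (0 < d)%N).

Definition Vskip t : 'M[R]_p :=
  \sum_(1 <= s < t.+1 | (d %| t - s)%N) X s *m (X s)^T + lambda%:M.

Local Notation ldV t := (ln (\det (Vskip t))).

Lemma Vskip0 : Vskip 0 = lambda%:M.
Proof. by rewrite /Vskip big_geq // add0r. Qed.

Lemma Vskip_rec t : (0 < t)%N -> Vskip t = Vskip (t - d) + X t *m (X t)^T.
Proof.
move=> t_gt0; rewrite /Vskip addrAC big_mkcond big_nat_recr //= subnn dvdn0 -big_mkcond.
congr (_ + _ + _); rewrite [RHS](big_nat_widen _ _ t); last by lia.
rewrite big_mkcond [RHS]big_mkcond; apply: eq_big_nat => s /andP[s_gt0 s_lt_t].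
congr (if _ then _ else _).
have [s_le|s_gt] := leqP s (t - d).
  have -> : (t - s = d + (t - d - s))%N by lia.
  by rewrite dvdn_addr // ltnS s_le andbT.
by rewrite ltnS leqNgt s_gt andbF gtnNdvd //; lia.
Qed.

Lemma Vmat_Vskip t : Vmat lambda X t =
  Vskip t + \sum_(1 <= s < t.+1 | ~~ (d %| t - s)%N) X s *m (X s)^T.
Proof. by rewrite /Vmat /Vskip (bigID (fun s => d %| t - s)%N) /= addrAC. Qed.

Lemma Vskip_sym t : (Vskip t)^T = Vskip t.
Proof. exact: sym_gram_reg. Qed.

Lemma Vskip_posdef t : posdefmx (Vskip t).
Proof. exact: posdef_gram_reg. Qed.

Lemma ln_det_Vskip_rec t : (0 < t)%N ->
  ldV t = ldV (t - d) + ln (1 + qform (invmx (Vskip (t - d))) (X t)).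
Proof.
move=> t_gt0; have symV := Vskip_sym (t - d); have pdV := Vskip_posdef (t - d).
have qX_ge0 := qform_invmx_ge0 _ (X t) symV pdV.
have /andP[detV_gt0 _] := hadamard_ineq _ symV pdV.
rewrite Vskip_rec // det_addmx_rank1 ?posdef_unitmx // lnM ?posrE //; lra.
Qed.

Lemma min1_mnorm_le t : (0 < t)%N ->
  Num.min 1 (mnorm (invmx (Vmat lambda X (t - d))) (X t) ^+ 2) <=
  2 * (ldV t - ldV (t - d)).
Proof.
move=> t_gt0; rewrite ln_det_Vskip_rec // addrC addKr.
have symW := Vskip_sym (t - d); have pdW := Vskip_posdef (t - d).
set W := Vskip (t - d); set V := Vmat lambda X (t - d).
have symV : V^T = V := sym_gram_reg _ _ _ _ _.
have pdV : posdefmx V := posdef_gram_reg _ _ _ _ _ lambda_gt0.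
have qV_le : qform (invmx V) (X t) <= qform (invmx W) (X t).
  move: (posdef_unitmx V symV pdV); rewrite /V Vmat_Vskip.
  apply: qform_invmxD_le => //; first exact: posdef_psd.
    by apply: psd_sum => s _; apply: psd_rank1.
  exact: posdef_unitmx.
rewrite /mnorm sqr_sqrtr; last exact: qform_invmx_ge0.
apply: (@le_trans _ _ (Num.min 1 (qform (invmx W) (X t)))).
  exact: le_min2 (lexx 1) qV_le.
exact: min1_le_2ln1D (qform_invmx_ge0 _ _ symW pdW).
Qed.

Lemma sum_min1_mnorm_le T : (d <= T)%N ->
  \sum_(d.+1 <= t < T.+1) Num.min 1 (mnorm (invmx (Vmat lambda X (t - d))) (X t) ^+ 2)
  <= 2 * (\sum_(i < d) ldV (T - i) - ldV 0 *+ d).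
Proof.
move=> d_le_T; rewrite -(telescope_sumr_lag _ (fun t => ldV t)) // mulr_sumr.
rewrite [leRHS](big_cat_nat _ (n := d.+1)) //=.
apply: ler_wpDl.
  rewrite big_nat_cond sumr_ge0 // => t /andP[/andP[t_gt0 _] _].
  rewrite ln_det_Vskip_rec // addrC addKr mulr_ge0 // ln_ge0 // lerDl.
  exact: qform_invmx_ge0 _ _ (Vskip_sym _) (Vskip_posdef _).
by apply: ler_sum_nat => t /andP[d_lt_t _]; apply: min1_mnorm_le; apply: leq_trans d_lt_t.
Qed.

Hypothesis normX_le1 : forall t, (1 <= t)%N -> norm2 (X t) <= 1.

Lemma sum_tr_Vskip_le T : \sum_(i < d) \tr (Vskip (T - i)) <= (lambda *+ p) *+ d + T%:R.
Proof.
have tr_step t : (0 < t)%N -> \tr (Vskip t) - \tr (Vskip (t - d)) <= 1.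
  move=> t_gt0; rewrite Vskip_rec // mxtraceD addrC addKr mxtrace_rank1 -sqr_norm2.
  by rewrite exprn_ile1 ?normX_le1 ?sqrtr_ge0.
have := telescope_sumr_lag _ (fun t => \tr (Vskip t)) d T d_gt0.
rewrite Vskip0 mxtrace_scalar => /(congr1 (fun S => S + (lambda *+ p) *+ d)).
rewrite subrK => <-; rewrite addrC lerD2l.
apply: le_trans (ler_sum_nat (G := fun=> 1) _) _ => [t /andP[t_gt0 _]|].
  exact: tr_step.
by rewrite sumr_const_nat subn1.
Qed.

Lemma sum_ln_det_Vskip_le T : (0 < p)%N ->
  \sum_(i < d) ldV (T - i) <=
  d%:R * p%:R * ln (lambda + T%:R / (d%:R * p%:R)).
Proof.
move=> p_gt0; set N : R := d%:R * p%:R; set m := lambda + T%:R / N.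
have N_gt0 : 0 < N by rewrite mulr_gt0 ?ltr0n.
have m_gt0 : 0 < m by rewrite /m ltr_wpDr // divr_ge0 ?ler0n ?ltW.
have Nm : N * m = (lambda *+ p) *+ d + T%:R.
  rewrite /m mulrDr mulrCA divff ?gt_eqF // mulr1.
  by rewrite -mulrnA mulnC -(mulr_natl lambda) natrM.
apply: (@le_trans _ _ (\sum_(i < d) ((ln m - 1) *+ p + \tr (Vskip (T - i)) / m))).
  by apply: ler_sum => i _; apply: ln_det_le; rewrite ?Vskip_sym //; apply: Vskip_posdef.
rewrite big_split /= sumr_const card_ord -mulr_suml.
rewrite -mulrnA mulnC -(mulr_natr (ln m - 1)) natrM -/N.
have : (\sum_(i < d) \tr (Vskip (T - i))) / m <= N.
  by rewrite ler_pdivrMr // Nm sum_tr_Vskip_le.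
lra.
Qed.

End SkipDesignMatrix.

Theorem lemma3 (R : realType) (p d : nat) (lambda : R) (X : nat -> 'cV[R]_p) :
  0 < lambda -> (1 <= d)%N ->
  (forall t, (1 <= t)%N -> norm2 (X t) <= 1) ->
  forall T : nat, (d.+1 <= T)%N ->
  \sum_(d.+1 <= t < T.+1)
      Num.min 1 (mnorm (invmx (Vmat lambda X (t - d))) (X t) ^+ 2)
  <= 2 * d%:R * p%:R * ln (1 + T%:R / (lambda * d%:R * p%:R)).
Proof.
move=> lambda_gt0 d_gt0 normX_le1 T d_lt_T.
have [p0|p_gt0] := posnP p.
  subst p; rewrite mulr0 mul0r big1 // => t _.
  by rewrite /mnorm mxE big_ord0 sqrtr0 expr0n min_r ?ler01.
apply: le_trans (sum_min1_mnorm_le _ _ _ lambda_gt0 d_gt0 _ (ltnW d_lt_T)) _.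
have := sum_ln_det_Vskip_le _ _ _ lambda_gt0 d_gt0 normX_le1 T p_gt0.
set m := lambda + _ => sum_le.
have m_gt0 : 0 < m by rewrite /m ltr_wpDr // divr_ge0 ?ler0n ?mulr_ge0.
have -> : 1 + T%:R / (lambda * d%:R * p%:R) = m / lambda.
  by rewrite /m; field; rewrite gt_eqF // !pnatr_eq0 -!lt0n p_gt0 d_gt0.
rewrite Vskip0 det_scalar lnXn // ln_div ?posrE // -mulrnA -(mulr_natr (ln lambda)) natrM.
lra.
Qed.
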